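(* Let $\Gamma\to\operatorname{U}(V)$ be a unitary representation of a finite group $\Gamma$ on a finite-dimensional hermitean vector space $V$. Then any $X\in\operatorname{Der}(\mathcal C^\infty(V))$ such that $X|_{\mathcal C^\infty(V)^\Gamma}=0$ vanishes.
   Context: $\mathcal C^\infty(V)$ is the algebra of smooth real-valued functions on $V$ viewed as a real vector space, $\mathcal C^\infty(V)^\Gamma$ its subalgebra of $\Gamma$-invariant functions, and $\operatorname{Der}(\mathcal C^\infty(V))$ the module of $\mathbb R$-linear derivations (smooth vector fields). *)

From mathcomp Require Import all_boot all_order all_algebra all_fingroup.
From mathcomp Require Import all_classical all_reals all_analysis.
From mathcomp.real_closed Require Export complex.
Import GRing.Theory Num.Theory.
Set Implicit Arguments. Unset Strict Implicit. Unset Printing Implicit Defensive.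
Local Open Scope ring_scope.

(* Realification: the complex space C^n = 'cV[R[i]]_n seen as the real vector
   space R^(2n) = 'cV[R]_(n+n) (real parts, then imaginary parts). *)
Definition realify (R : realType) (n : nat) (x : 'cV[R]_(n + n)) : 'cV[R[i]]_n :=
  \col_j Complex (x (lshift n j) 0) (x (rshift n j) 0).

Fixpoint Ck (R : realType) (V : normedModType R) (k : nat) (f : V -> R^o) : Prop :=
  match k with
  | 0 => continuous f
  | k'.+1 => (forall x, differentiable f x) /\ forall v : V, Ck k' (fun x => 'D_v f x)
  end.

Definition smooth (R : realType) (V : normedModType R) (f : V -> R^o) : Prop :=
  forall k, Ck k f.

Definition smoothC (R : realType) (n : nat) (f : 'cV[R[i]]_n -> R) : Prop :=
  smooth (f \o @realify R n).

(* X is an R-linear derivation of the algebra C^oo(C^n)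
   (represented on the carrier of all functions, acting on the smooth ones). *)
Definition is_derivation (R : realType) (n : nat)
    (X : ('cV[R[i]]_n -> R) -> ('cV[R[i]]_n -> R)) : Prop :=
  [/\ forall f, smoothC f -> smoothC (X f),
      forall (a : R) f g, smoothC f -> smoothC g ->
        X (fun x => a * f x + g x) = (fun x => a * X f x + X g x)
    & forall f g, smoothC f -> smoothC g ->
        X (fun x => f x * g x) = (fun x => f x * X g x + X f x * g x)].

Definition unitary_mx (R : realType) (n : nat) (A : 'M[R[i]]_n) : Prop :=
  A *m (map_mx (@conjc R) A)^T = 1%:M.

Definition unitary_rep (R : realType) (n : nat) (gT : finGroupType)
    (rho : gT -> 'M[R[i]]_n) : Prop :=
  (forall g h : gT, rho (g * h)%g = rho g *m rho h) /\ forall g, unitary_mx (rho g).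

Definition gamma_invariant (R : realType) (n : nat) (gT : finGroupType)
    (rho : gT -> 'M[R[i]]_n) (f : 'cV[R[i]]_n -> R) : Prop :=
  forall (g : gT) x, f (rho g *m x) = f x.

From HB Require Import structures.
From mathcomp Require Import all_boot all_order all_algebra all_fingroup.
From mathcomp Require Import all_classical all_reals all_analysis.
From mathcomp.real_closed Require Import complex.
From mathcomp Require Import ring lra.
Import Order.TTheory GRing.Theory Num.Theory.
Local Open Scope ring_scope.

(* For smooth [phi], the polynomial P_y(T) = prod_(A in rho(Gamma)) (T - phi(A y))
   has Gamma-invariant smooth coefficients, which X kills, and P_y(phi y) = 0.
   Applying the derivation X to this identity gives P_y'(phi y) * X phi (y) = 0,
   where P_y'(phi y) = prod_(A <> 1) (phi y - phi (A y)).  If the stabiliser of y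
   in rho(Gamma) is trivial, phi := f + s |. - y|^2 makes this product nonzero for
   all but finitely many s, whence X f (y) = 0.  Points with trivial stabiliser
   are dense and X f is continuous, so X f = 0. *)

Section Smooth.
Context {R : realType} {U V : normedModType R}.
Implicit Types (f g : V -> R^o).

Lemma Ck_continuous k f : Ck k f -> continuous f.
Proof. by case: k => [//|k] /= [df _] x; exact: differentiable_continuous. Qed.

Lemma CkS_Ck k f : Ck k.+1 f -> Ck k f.
Proof.
elim: k f => [|k IH] f [df Df]; first exact: (@Ck_continuous 1).
by split=> // v; apply: IH.
Qed.

Lemma Ck_cst k (c : R) : Ck k (fun _ : V => c : R^o).
Proof.
elim: k c => [|k IH] c /=; first by move=> x; exact: cst_continuous.
split=> [x|v]; first exact: differentiable_cst.
rewrite (_ : 'D_v _ = fun=> 0); first exact: IH.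
by apply/funext => x; exact: derive_cst.
Qed.

Lemma CkD k f g : Ck k f -> Ck k g -> Ck k (fun x => f x + g x).
Proof.
elim: k f g => [|k IH] f g /=.
  by move=> cf cg x; exact: (continuousD (cf x) (cg x)).
case=> df Df [dg Dg]; split=> [x|v]; first exact: differentiableD.
rewrite (_ : 'D_v _ = fun x => 'D_v f x + 'D_v g x); first exact: IH.
by apply/funext => x; apply: deriveD; exact: diff_derivable.
Qed.

Lemma CkM k f g : Ck k f -> Ck k g -> Ck k (fun x => f x * g x).
Proof.
elim: k f g => [|k IH] f g /=.
  by move=> cf cg x; exact: (continuousM (cf x) (cg x)).
move=> Cf Cg; have [[df Df] [dg Dg]] := (Cf, Cg); split=> [x|v].
  exact: differentiableM.
rewrite (_ : 'D_v _ = fun x => f x * 'D_v g x + g x * 'D_v f x).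
  by apply: CkD; apply: IH => //; exact: CkS_Ck.
by apply/funext => x; apply: deriveM; exact: diff_derivable.
Qed.

Lemma Ck_linear k (l : {linear V -> R^o}) : continuous l -> Ck k l.
Proof.
case: k => [//|k] cl /=; split=> [x|v]; first exact: linear_differentiable.
rewrite (_ : 'D_v l = fun=> l v); first exact: Ck_cst.
by apply/funext => x; rewrite deriveE ?diff_lin //; exact: linear_differentiable.
Qed.

Lemma Ck_comp_linear k (L : {linear U -> V}) f :
  continuous L -> Ck k f -> Ck k (f \o L).
Proof.
move=> cL; have dL x : differentiable L x by exact: linear_differentiable.
elim: k f => [|k IH] f /=.
  by move=> cf x; apply: continuous_comp; [exact: cL | exact: cf].
case=> df Df; split=> [x|v]; first exact: differentiable_comp.
rewrite (_ : 'D_v _ = 'D_(L v) f \o L); first exact: IH.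
apply/funext => x; rewrite /= deriveE; last exact: differentiable_comp.
by rewrite diff_comp // /= diff_lin // deriveE.
Qed.

Lemma smooth_cst (c : R) : smooth (fun _ : V => c : R^o).
Proof. by move=> k; exact: Ck_cst. Qed.

Lemma smoothD f g : smooth f -> smooth g -> smooth (fun x => f x + g x).
Proof. by move=> sf sg k; exact: CkD. Qed.

Lemma smoothM f g : smooth f -> smooth g -> smooth (fun x => f x * g x).
Proof. by move=> sf sg k; exact: CkM. Qed.

Lemma smoothB f g : smooth f -> smooth g -> smooth (fun x => f x - g x).
Proof.
move=> sf sg; rewrite (_ : (fun x => _) = fun x => f x + (-1) * g x).
  by apply: smoothD => //; apply: smoothM => //; exact: smooth_cst.
by apply/funext => x; rewrite mulN1r.
Qed.

Lemma smoothX f k : smooth f -> smooth (fun x => f x ^+ k).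
Proof.
move=> sf; elim: k => [|k IH].
  under eq_fun do rewrite expr0; exact: smooth_cst.
under eq_fun do rewrite exprS; exact: smoothM.
Qed.

Lemma smooth_sum (I : Type) (r : seq I) (F : I -> V -> R^o) :
  (forall i, smooth (F i)) -> smooth (fun x => \sum_(i <- r) F i x).
Proof.
move=> sF; elim: r => [|i r IH].
  under eq_fun do rewrite big_nil; exact: smooth_cst.
by under eq_fun do rewrite big_cons; exact: smoothD.
Qed.

Lemma smooth_linear (l : {linear V -> R^o}) : continuous l -> smooth l.
Proof. by move=> cl k; exact: Ck_linear. Qed.

Lemma smooth_comp_linear (L : {linear U -> V}) f :
  continuous L -> smooth f -> smooth (f \o L).
Proof. by move=> cL sf k; exact: Ck_comp_linear. Qed.

Lemma smooth_coef_prod_XsubC (I : Type) (r : seq I) (F : I -> V -> R^o) k :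
  (forall i, smooth (F i)) ->
  smooth (fun x => (\prod_(i <- r) ('X - (F i x)%:P))`_k).
Proof.
move=> sF; elim: r k => [|i r IH] k.
  under eq_fun do rewrite big_nil coef1; exact: smooth_cst.
under eq_fun do rewrite big_cons mulrBl coefB coefXM coefCM.
apply: smoothB; last exact: smoothM.
by case: k => [|k] /=; [exact: smooth_cst | exact: IH].
Qed.

End Smooth.

Lemma continuous_eq0_dense_zeros {R : realFieldType} {V : normedModType R}
    {G : V -> R^o} :
  continuous G -> (forall w0 e, 0 < e -> exists2 w, `|w0 - w| < e & G w = 0) ->
  forall w, G w = 0.
Proof.
move=> cG zeros w0.
apply: (@preimage_closed _ _ G [set x | x = 0] _ (@closed_eq R 0)) => [x _|].
  exact: cG.
move=> B /nbhs_ballP [e e0 eB]; have [w w0w Gw] := zeros w0 e e0.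
by exists w; split=> //; apply: eB; rewrite -ball_normE.
Qed.

Lemma exists_notin {R : realFieldType} (s : seq R) [a b : R] :
  a < b -> exists2 t, a < t < b & t \notin s.
Proof.
elim: s b => [|x s IH] b ab; first by exists ((a + b) / 2); rewrite ?midf_lt.
have [t /andP [at_ tb] ts] := IH b ab.
have [tx|tx] := eqVneq t x; last by exists t; rewrite ?at_ ?tb // inE negb_or tx.
have [t' /andP [at' t'x] t's] : exists2 t', a < t' < x & t' \notin s.
  by apply: IH; rewrite -tx.
exists t'; first by rewrite at' (lt_trans t'x) // -tx.
by rewrite inE negb_or t's (lt_eqF t'x).
Qed.

Section MatrixSmooth.
Context {R : realType} {m : nat}.
Local Notation V := ('cV[R]_m : normedModType R).

Lemma mulmx_continuous (M : 'M[R]_m) : continuous (fun w : V => M *m w : V).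
Proof.
have -> : (fun w : V => M *m w) = fun w => \sum_k w k 0 *: col k M.
  apply/funext => w; apply/matrixP => i j; rewrite !ord1 summxE !mxE.
  by apply: eq_bigr => k _; rewrite !mxE mulrC.
apply: continuous_big => [|k _]; first exact: add_continuous.
by move=> w; apply: continuousZr_tmp; exact: coord_continuous.
Qed.

Lemma smooth_coord (k : 'I_m) : smooth (fun w : V => w k 0 : R^o).
Proof.
have lin : linear (fun w : V => w k 0 : R^o) by move=> a u v; rewrite !mxE.
pose l : {linear V -> R^o} :=
  HB.pack (fun w : V => w k 0 : R^o) (GRing.isLinear.Build _ _ _ _ _ lin).
apply: (@smooth_linear _ _ l); exact: coord_continuous.
Qed.

Definition sqdist (c w : 'cV[R]_m) : R :=
  \sum_k (w k 0 - c k 0) ^+ 2.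

Lemma smooth_sqdist (c : 'cV[R]_m) :
  smooth (sqdist c : ('cV[R]_m : normedModType R) -> R^o).
Proof.
apply: smooth_sum => k; apply: smoothX; apply: smoothB; first exact: smooth_coord.
exact: smooth_cst.
Qed.

Lemma sqdistxx (c : 'cV[R]_m) : sqdist c c = 0.
Proof. by rewrite /sqdist big1 // => k _; rewrite subrr expr0n. Qed.

Lemma sqdist_gt0 (c w : 'cV[R]_m) : w != c -> 0 < sqdist c w.
Proof.
move=> wc; rewrite lt_def sumr_ge0 ?andbT => [|k _]; last exact: sqr_ge0.
apply: contra wc; rewrite psumr_eq0 => [/allP wc|k _]; last exact: sqr_ge0.
apply/eqP/matrixP => i j; rewrite ord1; apply/eqP.
by rewrite -subr_eq0 -sqrf_eq0; exact: (wc i (mem_index_enum i)).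
Qed.

End MatrixSmooth.

Section GenericVectors.
Context {R : realFieldType} {m : nat}.
Implicit Types (L : seq 'M[R]_m) (a d u : 'cV[R]_m).

Lemma exists_line_mulmx_neq0 L a d e : 0 < e ->
  (forall B, B \in L -> (B *m a != 0) || (B *m d != 0)) ->
  exists2 t, 0 < t < e & forall B, B \in L -> B *m (a + t *: d) != 0.
Proof.
move=> e0 HL.
(* If [B (a + t d) = 0], any coordinate [k] with [(B d)_k != 0] determines [t]. *)
have [t te tbad] :=
  exists_notin [seq - (B *m a) k 0 / (B *m d) k 0 | B <- L, k <- enum 'I_m] e0.
exists t => // B BL; rewrite mulmxDr -scalemxAr; apply/eqP => Bt0.
have [Bd0|/cV0Pn [k Bdk]] := eqVneq (B *m d) 0.
  by move: Bt0 (HL B BL); rewrite Bd0 scaler0 addr0 => ->; rewrite eqxx.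
move/negP: tbad; apply; apply/allpairsP; exists (B, k); split; rewrite ?mem_enum //=.
move: Bdk (congr1 (fun v : 'cV[R]_m => v k 0) Bt0); rewrite !mxE => Bdk /eqP.
by rewrite addr_eq0 => /eqP ->; rewrite opprK mulfK.
Qed.

Lemma exists_mulmx_neq0 L : (forall B, B \in L -> B != 0) ->
  exists u, forall B, B \in L -> B *m u != 0.
Proof.
elim: L => [|B0 L IH] HL; first by exists 0.
have [u Hu] : exists u, forall B, B \in L -> B *m u != 0.
  by apply: IH => B BL; apply: HL; rewrite inE BL orbT.
have /matrix0Pn [i [j B0ij]] := HL B0 (mem_head _ _).
pose ej : 'cV[R]_m := delta_mx j 0.
have B0j : B0 *m ej != 0 by rewrite -colE; apply/cV0Pn; exists i; rewrite mxE.
have [B|t _ Ht] := @exists_line_mulmx_neq0 (B0 :: L) u ej 1 ltr01.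
  by rewrite inE => /predU1P [->|/Hu ->]; rewrite ?B0j ?orbT.
by exists (u + t *: ej).
Qed.

Lemma near_mulmx_neq0 (L : seq 'M[R]_m) (w0 : 'cV[R]_m) e :
  0 < e -> (forall B, B \in L -> B != 0) ->
  exists2 w : 'cV[R]_m, `|w0 - w| < e & forall B, B \in L -> B *m w != 0.
Proof.
move=> e0 /exists_mulmx_neq0 [u Hu].
have [t /andP [t0 te] Ht] : exists2 t, 0 < t < e / (`|u| + 1) &
    forall B, B \in L -> B *m (w0 + t *: u) != 0.
  apply: exists_line_mulmx_neq0 => [|B /Hu ->]; last by rewrite orbT.
  by rewrite divr_gt0 // ltr_wpDl.
exists (w0 + t *: u) => //.
rewrite opprD addrA subrr add0r normrN normrZ gtr0_norm //.
move: te; rewrite ltr_pdivlMr ?ltr_wpDl // => te.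
by have := normr_ge0 u; nra.
Qed.

End GenericVectors.

Lemma sum_Complex {R : pzRingType} (I : Type) (r : seq I) (F G : I -> R) :
  \sum_(i <- r) Complex (F i) (G i) = Complex (\sum_(i <- r) F i) (\sum_(i <- r) G i).
Proof. by elim: r => [|i r IH]; rewrite ?big_nil // !big_cons IH. Qed.

Section Realify.
Context {R : realType} {n : nat}.
Local Notation W := ('cV[R]_(n + n) : normedModType R).
Local Notation CV := 'cV[R[i]]_n.
Implicit Types (f : CV -> R) (A : 'M[R[i]]_n).

Definition unrealify (x : CV) : 'cV[R]_(n + n) :=
  col_mx (\col_j complex.Re (x j 0)) (\col_j complex.Im (x j 0)).

Lemma realifyK : cancel unrealify (@realify R n).
Proof.
move=> x; apply/matrixP => j k; rewrite !ord1 mxE col_mxEu col_mxEd !mxE.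
by case: (x j 0).
Qed.

Lemma unrealifyK : cancel (@realify R n) unrealify.
Proof.
move=> w; apply/matrixP => j k; rewrite !ord1 -(splitK j).
by case: (fintype.split j) => j'; rewrite ?col_mxEu ?col_mxEd !mxE.
Qed.

Definition realify_mx A : 'M[R]_(n + n) :=
  block_mx (map_mx (@complex.Re R) A) (- map_mx (@complex.Im R) A)
           (map_mx (@complex.Im R) A) (map_mx (@complex.Re R) A).

Lemma realify_mxE A (w : 'cV[R]_(n + n)) :
  realify (realify_mx A *m w) = A *m realify w.
Proof.
rewrite -[w]vsubmxK mul_block_col; apply/matrixP => j k.
rewrite !ord1 mxE col_mxEu col_mxEd [RHS]mxE.
under [RHS]eq_bigr do rewrite mxE col_mxEu col_mxEd.
rewrite !mxE -!big_split -sum_Complex; apply: eq_bigr => i _ /=.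
rewrite !mxE; case: (A j i) => a b; apply/eqP; rewrite eq_complex /=.
by apply/andP; split; apply/eqP; ring.
Qed.

Lemma realify_mx_inj : injective realify_mx.
Proof.
move=> A B /eq_block_mx [reAB _ imAB _]; apply/matrixP => i j.
have entry (M N : 'M[R]_n) : M = N -> M i j = N i j by move->.
move: (entry _ _ reAB) (entry _ _ imAB); rewrite !mxE.
by case: (A i j) (B i j) => [a b] [c d] /= -> ->.
Qed.

Lemma realify_mx1 : realify_mx 1%:M = 1%:M.
Proof.
rewrite [RHS]scalar_mx_block /realify_mx.
by congr block_mx; apply/matrixP => i j; rewrite !mxE; case: eqP; rewrite /= ?oppr0.
Qed.

Lemma mulmx_realify_fixed A w :
  (A *m realify w == realify w) = ((realify_mx A - 1%:M) *m w == 0).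
Proof.
by rewrite mulmxBl mul1mx subr_eq0 -(inj_eq (can_inj unrealifyK)) realify_mxE.
Qed.

Lemma smoothC_comp_mulmx A f : smoothC f -> smoothC (fun x => f (A *m x)).
Proof.
move=> sf; rewrite /smoothC (_ : _ \o _ = (f \o @realify R n) \o mulmx (realify_mx A)).
  by apply: smooth_comp_linear sf; exact: mulmx_continuous.
by apply/funext => w /=; rewrite realify_mxE.
Qed.

Lemma smoothC_unrealify (F : W -> R^o) : smooth F -> smoothC (F \o unrealify).
Proof.
rewrite /smoothC -compA (_ : _ \o _ = id) //.
by apply/funext => w /=; rewrite unrealifyK.
Qed.

Lemma smoothC_continuous f : smoothC f -> continuous (f \o @realify R n : W -> R^o).
Proof. by move=> sf; exact: (@Ck_continuous _ _ 0 _ (sf 0%N)). Qed.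

End Realify.

Lemma horner_deriv_coef_wide {R : comNzRingType} [N : nat] [p : {poly R}] (x : R) :
  (size p <= N.+1)%N -> p^`().[x] = \sum_(i < N.+1) p`_i * (i%:R * x ^+ i.-1).
Proof.
move=> sp; have sd : (size p^`() <= N)%N.
  by apply: leq_trans (size_poly _ _) _; move: sp; case: (size p).
rewrite (horner_coef_wide x sd) big_ord_recl /= mul0r mulr0 add0r.
by apply: eq_bigr => i _; rewrite coef_deriv /bump leq0n add1n add0n mulrA mulr_natr.
Qed.

Section Derivation.
Context {R : realType} {n : nat}.
Local Notation CV := 'cV[R[i]]_n.
Context {X : (CV -> R) -> (CV -> R)} (derX : is_derivation X).
Implicit Types f g : CV -> R.

Lemma derivation_smooth f : smoothC f -> smoothC (X f).
Proof. by case: derX => H _ _; apply: H. Qed.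

Lemma derivation_linear (a : R) f g : smoothC f -> smoothC g ->
  X (fun x => a * f x + g x) = (fun x => a * X f x + X g x).
Proof. by case: derX => _ H _; apply: H. Qed.

Lemma derivationM f g : smoothC f -> smoothC g ->
  X (fun x => f x * g x) = (fun x => f x * X g x + X f x * g x).
Proof. by case: derX => _ _ H; apply: H. Qed.

Lemma derivationD f g : smoothC f -> smoothC g ->
  X (fun x => f x + g x) = (fun x => X f x + X g x).
Proof.
move=> sf sg; have := @derivation_linear 1 f g sf sg.
by under eq_fun do rewrite mul1r; move=> ->; under eq_fun do rewrite mul1r.
Qed.

Lemma derivation_cst (c : R) : X (fun=> c) = (fun=> 0).
Proof.
have s0 : smoothC (fun _ : CV => 0 : R) := smooth_cst 0.
have s1 : smoothC (fun _ : CV => 1 : R) := smooth_cst 1.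
have X0 : X (fun=> 0) = (fun=> 0).
  apply/funext => x; have := congr1 (fun F => F x) (derivationD _ _ s0 s0).
  by rewrite /= addr0; lra.
have X1 : X (fun=> 1) = (fun=> 0).
  apply/funext => x; have := congr1 (fun F => F x) (derivationM _ _ s1 s1).
  by rewrite /= mul1r mulr1; lra.
have := derivation_linear c _ _ s1 s0; rewrite X0 X1.
under eq_fun do rewrite mulr1 addr0; move=> ->.
by apply/funext => x; rewrite mulr0 addr0.
Qed.

Lemma derivation_sum (I : Type) (r : seq I) (F : I -> CV -> R) :
  (forall i, smoothC (F i)) ->
  X (fun x => \sum_(i <- r) F i x) = (fun x => \sum_(i <- r) X (F i) x).
Proof.
move=> sF; elim: r => [|i r IH].
  by apply/funext => x; under eq_fun do rewrite big_nil; rewrite derivation_cst big_nil.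
under eq_fun do rewrite big_cons; rewrite derivationD ?IH //; last exact: smooth_sum.
by under [RHS]eq_fun do rewrite big_cons.
Qed.

Lemma derivationX f k : smoothC f ->
  X (fun x => f x ^+ k) = (fun x => k%:R * f x ^+ k.-1 * X f x).
Proof.
move=> sf; elim: k => [|k IH].
  under eq_fun do rewrite expr0; rewrite derivation_cst.
  by apply/funext => x; rewrite !mul0r.
under eq_fun do rewrite exprS; rewrite derivationM ?IH //; last exact: smoothX.
apply/funext => x; case: k {IH} => [|k]; first by rewrite !expr0; ring.
by rewrite /= exprS -[k.+2]addn1 natrD -[k.+1]addn1 natrD; ring.
Qed.

Lemma derivation_horner [p : CV -> {poly R}] [N : nat] [phi : CV -> R] :
  (forall y, size (p y) <= N.+1)%N ->
  (forall i, smoothC (fun y => (p y)`_i)) ->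
  (forall i, X (fun y => (p y)`_i) = (fun=> 0)) ->
  smoothC phi ->
  X (fun y => (p y).[phi y]) = (fun y => (p y)^`().[phi y] * X phi y).
Proof.
move=> sp scoef Xcoef sphi.
under eq_fun do rewrite (horner_coef_wide _ (sp _)).
rewrite derivation_sum => [|i]; last by apply: smoothM; [exact: scoef | exact: smoothX].
apply/funext => y; rewrite (horner_deriv_coef_wide _ (sp y)) mulr_suml.
apply: eq_bigr => i _; rewrite derivationM ?derivationX ?Xcoef //; last exact: smoothX.
by rewrite mul0r addr0 mulrA.
Qed.

End Derivation.

Section OrbitPolynomial.
Context {R : realType} {n : nat} {gT : finGroupType}.
Local Notation CV := 'cV[R[i]]_n.
Local Notation MM := 'M[R[i]]_n.
Context {rho : gT -> MM} (rhoM : {morph rho : g h / (g * h)%g >-> g *m h})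
  (rho_unit : forall g, rho g \in unitmx).

Lemma rho1 : rho 1%g = 1%:M.
Proof.
have idem : rho 1%g *m rho 1%g = rho 1%g by rewrite -rhoM mulg1.
by rewrite -[LHS](mulmxK (rho_unit 1%g)) idem mulmxV ?rho_unit.
Qed.

Definition rho_nontriv : seq MM :=
  [seq A <- undup [seq rho g | g <- enum gT] | A != 1%:M].

Definition rho_img : seq MM := 1%:M :: rho_nontriv.

Lemma mem_rho_img g : rho g \in rho_img.
Proof.
rewrite inE; have [//|ne1] := eqVneq (rho g) 1%:M.
by rewrite mem_filter ne1 mem_undup map_f ?mem_enum.
Qed.

Lemma rho_imgP A : A \in rho_img -> exists g, A = rho g.
Proof.
rewrite inE => /predU1P [->|]; first by exists 1%g; rewrite rho1.
by rewrite mem_filter mem_undup => /andP [_ /mapP [g _ ->]]; exists g.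
Qed.

Lemma uniq_rho_img : uniq rho_img.
Proof. by rewrite /= mem_filter eqxx filter_uniq ?undup_uniq. Qed.

Lemma perm_rho_img_mulmx g : perm_eq [seq A *m rho g | A <- rho_img] rho_img.
Proof.
apply: uniq_perm uniq_rho_img _.
  by rewrite map_inj_uniq ?uniq_rho_img //; exact: can_inj (mulmxK (rho_unit g)).
move=> A; apply/mapP/idP => [[B /rho_imgP [h ->] ->]|/rho_imgP [h ->]].
  by rewrite -rhoM mem_rho_img.
by exists (rho (h * g^-1)%g); rewrite ?mem_rho_img // -rhoM -mulgA mulVg mulg1.
Qed.

Definition orbit_poly (phi : CV -> R) (y : CV) : {poly R} :=
  \prod_(A <- rho_img) ('X - (phi (A *m y))%:P).

Lemma orbit_poly_invariant phi g y : orbit_poly phi (rho g *m y) = orbit_poly phi y.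
Proof.
rewrite /orbit_poly; under eq_bigr do rewrite mulmxA.
rewrite -(big_map (mulmx^~ (rho g)) xpredT (fun B => 'X - (phi (B *m y))%:P)).
exact: perm_big (perm_rho_img_mulmx g).
Qed.

Lemma size_orbit_poly phi y : size (orbit_poly phi y) = (size rho_nontriv).+2.
Proof.
rewrite /orbit_poly -(big_map (fun A => phi (A *m y)) xpredT (fun c => 'X - c%:P)).
by rewrite size_prod_XsubC size_map.
Qed.

Lemma root_orbit_poly phi y : (orbit_poly phi y).[phi y] = 0.
Proof. by rewrite /orbit_poly big_cons mul1mx hornerM hornerXsubC subrr mul0r. Qed.

Lemma deriv_orbit_poly phi y :
  (orbit_poly phi y)^`().[phi y] = \prod_(A <- rho_nontriv) (phi y - phi (A *m y)).
Proof.
rewrite /orbit_poly big_cons mul1mx derivM derivXsubC mul1r hornerD hornerM.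
rewrite hornerXsubC subrr mul0r addr0 horner_prod.
by apply: eq_bigr => A _; rewrite hornerXsubC.
Qed.

Context {X : (CV -> R) -> (CV -> R)} (derX : is_derivation X)
  (X_invariant : forall f, smoothC f -> gamma_invariant rho f -> X f = (fun=> 0)).

Lemma orbit_gap_mul_derivation phi y : smoothC phi ->
  \prod_(A <- rho_nontriv) (phi y - phi (A *m y)) * X phi y = 0.
Proof.
move=> sphi; rewrite -deriv_orbit_poly.
have scoef i : smoothC (fun z => (orbit_poly phi z)`_i).
  by apply: smooth_coef_prod_XsubC => A; exact: smoothC_comp_mulmx.
have Xcoef i : X (fun z => (orbit_poly phi z)`_i) = (fun=> 0).
  by apply: X_invariant => // g z; rewrite orbit_poly_invariant.
have size_le z : (size (orbit_poly phi z) <= (size rho_nontriv).+2)%N.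
  by rewrite size_orbit_poly.
have := derivation_horner derX size_le scoef Xcoef sphi.
under eq_fun do rewrite root_orbit_poly.
by rewrite (derivation_cst derX) => /(congr1 (fun F => F y)).
Qed.

Lemma derivation_eq0_orbit_separating phi y : smoothC phi ->
  (forall A, A \in rho_nontriv -> phi (A *m y) != phi y) -> X phi y = 0.
Proof.
move=> sphi sep; have gap : \prod_(A <- rho_nontriv) (phi y - phi (A *m y)) != 0.
  by rewrite prodf_seq_neq0; apply/allP => A /sep; rewrite /= subr_eq0 eq_sym.
apply/eqP; have /eqP := orbit_gap_mul_derivation _ y sphi.
by rewrite mulf_eq0 (negbTE gap).
Qed.

Lemma derivation_eq0_at_free f y : smoothC f ->
  (forall A, A \in rho_nontriv -> A *m y != y) -> X f y = 0.
Proof.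
move=> sf free; pose psi z := sqdist (unrealify y) (unrealify z).
have spsi : smoothC psi := smoothC_unrealify _ (smooth_sqdist _).
have psiy : psi y = 0 := sqdistxx _.
have psi_gt0 A : A \in rho_nontriv -> 0 < psi (A *m y).
  by move=> /free Ay; apply: sqdist_gt0; rewrite (inj_eq (can_inj realifyK)).
have Xpsi : X psi y = 0.
  apply: derivation_eq0_orbit_separating => // A /psi_gt0.
  by rewrite psiy lt0r => /andP [].
have [s _ sbad] :=
  exists_notin [seq (f y - f (A *m y)) / psi (A *m y) | A <- rho_nontriv] ltr01.
have sphi : smoothC (fun z => s * psi z + f z).
  by apply: smoothD => //; apply: smoothM => //; exact: smooth_cst.
have := derivation_eq0_orbit_separating _ y sphi.
rewrite (derivation_linear derX) // Xpsi mulr0 add0r; apply => A AT.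
apply: contraNneq sbad; rewrite psiy mulr0 add0r => E; apply/mapP; exists A => //.
by rewrite -E addrK mulfK // gt_eqF // psi_gt0.
Qed.

Lemma derivation_eq0 f : smoothC f -> X f = (fun=> 0).
Proof.
move=> sf; apply/funext => y; rewrite -(realifyK y).
have cXf := smoothC_continuous _ (derivation_smooth derX _ sf).
apply: (continuous_eq0_dense_zeros cXf) => w0 e e0.
have [|w w0w Hw] :=
  @near_mulmx_neq0 _ _ [seq realify_mx A - 1%:M | A <- rho_nontriv] w0 e e0.
  move=> B /mapP [A]; rewrite mem_filter => /andP [A1 _] ->.
  by rewrite subr_eq0 -realify_mx1 (inj_eq realify_mx_inj).
exists w => //; apply: derivation_eq0_at_free => // A AT.
by rewrite mulmx_realify_fixed; apply: Hw; exact: map_f.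
Qed.

End OrbitPolynomial.

Theorem mainTheorem10 (R : realType) (n : nat) (gT : finGroupType)
    (rho : gT -> 'M[R[i]]_n) (X : ('cV[R[i]]_n -> R) -> ('cV[R[i]]_n -> R)) :
  unitary_rep rho ->
  is_derivation X ->
  (forall f, smoothC f -> gamma_invariant rho f -> X f = (fun _ => 0)) ->
  forall f, smoothC f -> X f = (fun _ => 0).
Proof.
move=> [rhoM rho_unitary] derX X_invariant.
have rho_unit g : rho g \in unitmx by case: (mulmx1_unit (rho_unitary g)).
exact: (derivation_eq0 rhoM rho_unit derX X_invariant).
Qed.
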